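(* Let $T\in\mathbb{R}^{m\times m}$ be symmetric with eigendecomposition $T=Q\Lambda Q^\top$, $\Lambda=\operatorname{diag}(\lambda_1,\ldots,\lambda_m)$, let $f$ be continuously differentiable on an open interval containing the $\lambda_i$, let $u\in\mathbb{R}^n$ be nonzero, $c=Q^\top e_1$, $F$ the divided-difference matrix with $F_{ij}=\frac{f(\lambda_i)-f(\lambda_j)}{\lambda_i-\lambda_j}$ if $\lambda_i\neq\lambda_j$ and $F_{ij}=f'(\lambda_i)$ otherwise, and $G=\|u\|^2Q((cc^\top)\circ F)Q^\top$. If $S\in\mathbb{R}^{m\times m}$ satisfies $S^\top=-S$ and $Se_1=0$, then $\operatorname{tr}(G^\top[T,S])=0$, where $[T,S]=TS-ST$.
   Context: $\circ$ denotes the Hadamard product and $e_1$ the first standard basis vector of $\mathbb{R}^m$. *)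

From HB Require Import structures.
From mathcomp Require Import all_boot all_order all_algebra.
From mathcomp Require Import all_classical all_reals.
From mathcomp Require Import topology normedtype derive.
Set Implicit Arguments. Unset Strict Implicit. Unset Printing Implicit Defensive.
Import Order.TTheory GRing.Theory Num.Theory numFieldNormedType.Exports.
Local Open Scope ring_scope.

Definition hadamard (R : pzRingType) (p q : nat) (A B : 'M[R]_(p, q)) : 'M[R]_(p, q) :=
  \matrix_(i, j) (A i j * B i j).

Definition e1 (R : pzRingType) (m : nat) : 'cV[R]_m.+1 :=
  \col_i (if i == ord0 then 1 else 0).

Definition divdiff (R : realType) (f : R -> R) (m : nat) (lam : 'rV[R]_m) : 'M[R]_m :=
  \matrix_(i, j) (if lam 0 i != lam 0 j
                  then (f (lam 0 i) - f (lam 0 j)) / (lam 0 i - lam 0 j)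
                  else derive1 f (lam 0 i)).

Definition sqnorm (R : pzRingType) (n : nat) (u : 'cV[R]_n) : R :=
  \sum_i u i 0 ^+ 2.

From HB Require Import structures.
From mathcomp Require Import all_boot all_order all_algebra.
From mathcomp Require Import all_classical all_reals.
From mathcomp Require Import topology normedtype derive.
From mathcomp Require Import ring.
Import Order.TTheory GRing.Theory Num.Theory numFieldNormedType.Exports.
Local Open Scope ring_scope.

(* Conjugating by Q reduces the claim to tr(M [D, X]) = tr([M, D] X) = 0, where
   D = diag(lam), M = (c c^T) o F is symmetric and X = Q^T S Q is skew with
   X c = 0.  Entrywise, [M, D]_ij = c_i c_j F_ij (lam_j - lam_i)
   = c_i c_j (f(lam_j) - f(lam_i)), whatever F_ii is, so [M, D] = c h^T - h c^T
   with h = c o f(lam).  Both tr(c h^T X) = h^T X c and tr(h c^T X) = c^T X h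
   vanish, since X c = 0 and c^T X = -(X c)^T = 0.  No smoothness of f is used. *)

Lemma trmx_hadamard (R : pzRingType) (p q : nat) (A B : 'M[R]_(p, q)) :
  (hadamard A B)^T = hadamard A^T B^T.
Proof. by apply/matrixP => i j; rewrite !mxE. Qed.

Lemma trmx_divdiff (R : realType) (f : R -> R) (m : nat) (lam : 'rV[R]_m) :
  (divdiff f lam)^T = divdiff f lam.
Proof.
apply/matrixP => i j; rewrite !mxE eq_sym.
case: eqP => [->|_] //=.
by rewrite -opprB -[lam 0 j - _]opprB invrN mulrN mulNr opprK.
Qed.

Lemma hadamard_divdiff_commutator (R : realType) (f : R -> R) (m : nat)
    (lam : 'rV[R]_m) (A : 'M[R]_m) :
  let M := hadamard A (divdiff f lam) in
  M *m diag_mx lam - diag_mx lam *m M =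
    hadamard A (\matrix_(i, j) (f (lam 0 j) - f (lam 0 i))).
Proof.
apply/matrixP => i j; rewrite mul_mx_diag mul_diag_mx !mxE.
case: eqP => [->|/eqP ne] /=; first by ring.
have lam_ij : lam 0 i - lam 0 j != 0 by rewrite subr_eq0.
by field.
Qed.

Lemma hadamard_outer_diff (R : comPzRingType) (m : nat) (c w : 'cV[R]_m) :
  hadamard (c *m c^T) (\matrix_(i, j) (w j 0 - w i 0)) =
    c *m (hadamard c w)^T - hadamard c w *m c^T.
Proof. by apply/matrixP => i j; rewrite !mxE !big_ord1 !mxE; ring. Qed.

Lemma mxtrace_conj_commutator (R : comPzRingType) (m : nat) (Q A D S : 'M[R]_m) :
  Q^T *m Q = 1%:M ->
  \tr (Q *m A *m Q^T *m (Q *m D *m Q^T *m S - S *m (Q *m D *m Q^T))) =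
    \tr ((A *m D - D *m A) *m (Q^T *m S *m Q)).
Proof.
move=> QtQ; rewrite mulmxBr mulmxBl !linearB /=; congr (_ - _).
  rewrite -!mulmxA (mulmxA Q^T Q) QtQ mul1mx mxtrace_mulC.
  by rewrite !mulmxA.
rewrite -!mulmxA mxtrace_mulC !mulmxA -(mulmxA _ Q^T Q) QtQ mulmx1.
by rewrite mxtrace_mulC !mulmxA.
Qed.

Lemma mxtrace_outer_skew (R : comPzRingType) (m : nat) (c h : 'cV[R]_m)
    (X : 'M[R]_m) :
  X^T = - X -> X *m c = 0 -> \tr ((c *m h^T - h *m c^T) *m X) = 0.
Proof.
move=> skewX Xc.
have cX : c^T *m X = 0.
  by rewrite -[c^T *m X]trmxK trmx_mul trmxK skewX mulNmx Xc oppr0 trmx0.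
rewrite mulmxBl linearB /= -!mulmxA cX mulmx0 linear0 subr0.
by rewrite mxtrace_mulC -mulmxA Xc mulmx0 linear0.
Qed.

Theorem lemma2 (R : realType) (m n : nat) (T Q : 'M[R]_m.+1) (lam : 'rV[R]_m.+1)
    (f : R -> R) (a b : R) (u : 'cV[R]_n) (S : 'M[R]_m.+1) :
  T^T = T ->
  Q *m Q^T = 1%:M ->
  T = Q *m diag_mx lam *m Q^T ->
  (forall i, a < lam 0 i < b) ->
  (forall x, a < x < b -> derivable f x 1) ->
  {in `]a, b[, continuous (derive1 f)} ->
  u != 0 ->
  S^T = - S ->
  S *m e1 R m = 0 ->
  let c := Q^T *m e1 R m in
  let G := sqnorm u *: (Q *m hadamard (c *m c^T) (divdiff f lam) *m Q^T) in
  \tr (G^T *m (T *m S - S *m T)) = 0.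
Proof.
move=> _ QQt -> _ _ _ _ skewS Se c G.
have QtQ : Q^T *m Q = 1%:M by apply: mulmx1C.
have skewX : (Q^T *m S *m Q)^T = - (Q^T *m S *m Q).
  by rewrite !trmx_mul trmxK skewS mulNmx mulmxN mulmxA.
have Xc : Q^T *m S *m Q *m c = 0.
  by rewrite /c -!mulmxA (mulmxA Q) QQt mul1mx Se mulmx0.
clearbody c.
have symM : (hadamard (c *m c^T) (divdiff f lam))^T =
            hadamard (c *m c^T) (divdiff f lam).
  by rewrite trmx_hadamard trmx_divdiff trmx_mul trmxK.
rewrite /G linearZ /= !trmx_mul trmxK symM mulmxA -scalemxAl linearZ /=.
rewrite (mxtrace_conj_commutator _ _ _ _ _ _ QtQ) hadamard_divdiff_commutator.
have -> : \matrix_(i, j) (f (lam 0 j) - f (lam 0 i)) =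
          \matrix_(i, j) ((map_mx f lam^T) j 0 - (map_mx f lam^T) i 0).
  by apply/matrixP => i j; rewrite !mxE.
by rewrite hadamard_outer_diff mxtrace_outer_skew // mulr0.
Qed.
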